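(* If $6$ divides $n$, then $IK_n$ is not a $G$-graph.
   Context: $K_n$ is the complete simple graph on $n$ vertices and $IK_n$ its incidence graph (the simple graph whose vertices are the vertices and edges of $K_n$, each edge adjacent exactly to its two end-points). For a group $G$ and a multiset $S$ of elements of $G$, $\Phi(G,S)$ is the multigraph whose vertex set is the union over the members $s$ of $S$ (with multiplicity) of the right cosets $\langle s\rangle x$, $x\in G$, with one edge labeled $g$ between $\langle s\rangle x$ and $\langle t\rangle y$ ($s,t$ distinct members of $S$) for each $g\in\langle s\rangle x\cap\langle t\rangle y$, and no other edges; a $G$-graph is a multigraph isomorphic (ignoring labels) to some $\Phi(G,S)$. *)

From mathcomp Require Import all_boot all_fingroup.
Set Implicit Arguments. Unset Strict Implicit. Unset Printing Implicit Defensive.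

(* A finite loopless multigraph is given by a vertex finType V and an edge
   multiplicity function m : V -> V -> nat (m u v = number of edges between
   u and v). *)
Definition mg_iso (V W : finType) (a : V -> V -> nat) (b : W -> W -> nat) : Prop :=
  exists f : V -> W, bijective f /\ forall u v, b (f u) (f v) = a u v.

(* Incidence graph IK_n of the complete graph K_n: vertices are the vertices
   ('I_n) and the edges (2-subsets of 'I_n) of K_n; an edge-vertex is adjacent
   (by exactly one edge) to its two end-points. *)
Definition IK_vert (n : nat) : finType :=
  ('I_n + {e : {set 'I_n} | #|e| == 2})%type.

Definition IK_mult (n : nat) (u v : IK_vert n) : nat :=
  match u, v with
  | inl x, inr e => (x \in sval e : nat)
  | inr e, inl x => (x \in sval e : nat)
  | _, _ => 0
  end.

(* Phi(G,S): S is a multiset of elements of G, represented as a sequence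
   (members indexed by 'I_(size S)). *)
Definition Phi_vert (gT : finGroupType) (G : {group gT}) (S : seq gT) : finType :=
  {x : 'I_(size S) * {set gT} | x.2 \in rcosets <[nth 1%g S x.1]> G}.

Definition Phi_mult (gT : finGroupType) (G : {group gT}) (S : seq gT)
    (u v : Phi_vert G S) : nat :=
  if (sval u).1 != (sval v).1 then #|(sval u).2 :&: (sval v).2| else 0.

From mathcomp Require Import all_boot all_fingroup.
From mathcomp Require Import pgroup sylow cyclic.
From mathcomp Require Import zify.
Set Implicit Arguments. Unset Strict Implicit. Unset Printing Implicit Defensive.
Import GroupScope.

(* Since IK_n is bipartite while the cyclic subgroups <[s]> (s \in S) pairwise
   meet in 1, an isomorphism IK_n ~ Phi(G, S) forces S to have two members s, t.
   The vertices of K_n then correspond to the right cosets of A = <[s]> and its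
   edges to those of B = <[t]>, incidence being a one-point intersection.  In
   the action of G on the n cosets of A by right multiplication, an element g
   fixing two cosets also fixes the B-coset meeting both, hence the point where
   it meets one of them, so g = 1; and any two cosets are exchanged by an
   involution.  By Burnside's lemma such an action has only n - 1 fixed-point-
   free elements.  But an element of prime order p dividing n fixes a number of
   cosets that is divisible by p and at most 1, hence none; when 6 %| n this
   applies to the n - 1 involutions moving A to the other cosets and to an
   element of order 3. *)

Lemma order_eq2 (gT : finGroupType) (g : gT) : g != 1 -> g * g = 1 -> #[g] = 2.
Proof.
move=> ntg gg; apply/(@prime_nt_dvdP _ 2 isT); first by rewrite order_eq1.
by rewrite order_dvdn expgS expg1 gg.
Qed.

Lemma rcosets_refl (gT : finGroupType) (A G : {group gT}) :
  (A : {set gT}) \in rcosets A G.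
Proof. by apply/rcosetsP; exists 1; rewrite ?group1 ?rcoset1. Qed.

Section Rcosets.

Variables (gT : finGroupType) (A G : {group gT}).

Lemma rcosets_sub C : A \subset G -> C \in rcosets A G -> C \subset G.
Proof. by move=> sAG /rcosetsP[g Gg ->]; rewrite -(rcoset_id Gg) rcosetS. Qed.

Lemma rcosets_rcoset C c : C \in rcosets A G -> c \in C -> C = A :* c.
Proof. by move=> /rcosetsP[g _ ->] /rcoset_eqP. Qed.

Lemma rcosets_mulg C g : C \in rcosets A G -> g \in G -> C :* g \in rcosets A G.
Proof.
by move=> /rcosetsP[h Gh ->] Gg; apply/rcosetsP; exists (h * g); rewrite ?groupM ?rcosetM.
Qed.

Lemma mem_rcoset_mulg (X : {set gT}) g x : (x * g \in X :* g) = (x \in X).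
Proof. by rewrite mem_rcoset mulgK. Qed.

Lemma mem_afix_Rs (Om : {set {set gT}}) g C :
  (C \in 'Fix_(Om | 'Rs)[g]) = (C \in Om) && (C :* g == C).
Proof. by rewrite inE; congr andb; apply/afix1P/eqP; rewrite /= rcosetE. Qed.

End Rcosets.

Section FixedPointFree.

Variables (aT : finGroupType) (D : {group aT}) (rT : finType) (to : action D rT).
Variables (G : {group aT}) (S : {set rT}).
Hypothesis actsGS : [acts G, on S | to].

Lemma afix_prime_order_eq0 g :
  g \in G -> prime #[g] -> #[g] %| #|S| -> #|'Fix_(S | to)[g]| <= 1 ->
  'Fix_(S | to)[g] = set0.
Proof.
move=> Gg prime_g dvd_gS fix_le1.
have pg : #[g].-group <[g]> by rewrite /pgroup -orderE pnat_id.
have actsgS : [acts <[g]>, on S | to] by apply: subset_trans actsGS; rewrite cycle_subG.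
have := pgroup_fix_mod pg actsgS.
rewrite afix_cycle_in ?(subsetP (acts_dom actsGS)) // (eqP dvd_gS).
rewrite modn_small ?(leq_ltn_trans fix_le1 (prime_gt1 prime_g)) // => /esym/eqP.
by rewrite cards_eq0 => /eqP.
Qed.

(* By Burnside's lemma the nonidentity elements fix #|G| - #|S| points in all,
   one for each element that is not fixed-point-free: exactly #|S| - 1 are. *)
Lemma card_fixfree_lt :
  [transitive G, on S | to] ->
  (forall g, g \in G -> g != 1 -> #|'Fix_(S | to)[g]| <= 1) ->
  #|[set g in G^# | 'Fix_(S | to)[g] == set0]| < #|S|.
Proof.
move=> transGS fix_le1; set F := [set g in G^# | _].
have sFG : F \subset G^# by apply/subsetP => g; rewrite inE => /andP[].
have orbitsGS : orbit to G @: S = [set S].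
  apply/setP => X; rewrite inE; apply/imsetP/eqP => [[x Sx ->]|->].
    exact: atransPin (acts_dom actsGS) transGS x Sx.
  by case/imsetP: transGS => x Sx defS; exists x.
have := Frobenius_Cauchy actsGS; rewrite orbitsGS cards1 mul1n.
rewrite (bigD1 1) //= (_ : 'Fix_(S | to)[1] = S); last first.
  by apply/setIidPl/subsetP => x _; apply/afix1P; rewrite act1.
rewrite (eq_bigl [in G^#]) => [|g]; last by rewrite !inE andbC.
rewrite (big_setID F) (setIidPr sFG) /= big1 => [|g]; last first.
  by rewrite inE => /andP[_ /eqP ->]; rewrite cards0.
rewrite add0n; set s := \sum_(_ in _) _ => sumG.
have s_le : s <= #|G^# :\: F|.
  rewrite -sum1_card; apply: leq_sum => g; rewrite !inE => /andP[_ /andP[ntg Gg]].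
  exact: fix_le1.
have cardF := cardsID F G^#; rewrite (setIidPr sFG) in cardF.
have cardG := cardsD1 1 G; rewrite group1 add1n in cardG.
by rewrite -(ltn_add2r s) sumG cardG -cardF ltnS leq_add2l.
Qed.

End FixedPointFree.

Lemma index_not_dvd6 (gT : finGroupType) (G A : {group gT}) :
    A \subset G ->
    (forall g, g \in G -> g != 1 -> #|'Fix_(rcosets A G | 'Rs)[g]| <= 1) ->
    (forall C, C \in rcosets A G -> C != A ->
       exists2 g, g \in G & #[g] = 2 /\ A :* g = C) ->
  ~~ (6 %| #|G : A|).
Proof.
move=> sAG fix_le1 swapA; apply/negP => dvd6_GA; set Om := rcosets A G.
set F := [set g in G^# | 'Fix_(Om | 'Rs)[g] == set0].
have F_prime g : g \in G -> prime #[g] -> #[g] %| 6 -> g \in F.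
  move=> Gg pr_g dvd_g6; have ntg : g != 1 by rewrite -order_eq1 gtn_eqF ?prime_gt1.
  rewrite !inE ntg Gg (afix_prime_order_eq0 (actsRs_rcosets A G)) ?eqxx //.
    exact: dvdn_trans dvd_g6 dvd6_GA.
  exact: fix_le1.
have [t Gt t_order] : {t | t \in G & #[t] = 3}.
  apply: Cauchy => //; rewrite -(Lagrange sAG) dvdn_mull //.
  exact: dvdn_trans dvd6_GA.
set J := [set g in G | #[g] == 2].
have card_J : #|Om| <= #|J|.+1.
  rewrite (cardsD1 (A : {set gT})) rcosets_refl add1n ltnS.
  apply: (leq_trans _ (leq_imset_card (fun g => A :* g) J)).
  apply/subset_leq_card/subsetP => C.
  rewrite !inE => /andP[ntCA OmC]; have [g Gg [g_order <-]] := swapA C OmC ntCA.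
  by apply/imsetP; exists g; rewrite // inE Gg g_order.
have tJ_F : t |: J \subset F.
  apply/subsetP => g /setU1P[-> | ]; first by rewrite F_prime // t_order.
  by rewrite inE => /andP[Gg /eqP g_order]; rewrite F_prime // g_order.
have := card_fixfree_lt (actsRs_rcosets A G) (transRs_rcosets A G) fix_le1.
rewrite -/Om ltnNge => /negP; apply; apply: leq_trans (subset_leq_card tJ_F).
by rewrite cardsU1 inE t_order andbF add1n.
Qed.

Notation K_edge n := {e : {set 'I_n} | #|e| == 2}.

Lemma edge_of_pair n (x y : 'I_n) : x != y -> exists e : K_edge n, sval e = [set x; y].
Proof.
move=> xy; have e2 : #|[set x; y]| == 2 by rewrite cards2 xy.
by exists (exist (fun e : {set 'I_n} => #|e| == 2) _ e2).
Qed.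

Lemma edge_eq_pair n (e : K_edge n) x y :
  x != y -> x \in sval e -> y \in sval e -> sval e = [set x; y].
Proof.
move=> xy xe ye; apply/esym/eqP; rewrite eqEcard (eqP (svalP e)) cards2 xy andbT.
by apply/subsetP => z; rewrite !inE => /orP[] /eqP ->.
Qed.

Section CosetIncidence.

Variables (gT : finGroupType) (G A B : {group gT}) (n : nat).
Variables (pt : 'I_n -> {set gT}) (ln : K_edge n -> {set gT}).
Hypotheses (sAG : A \subset G) (sBG : B \subset G).
Hypothesis pt_coset : forall x, pt x \in rcosets A G.
Hypothesis pt_onto : forall C, C \in rcosets A G -> exists x, pt x = C.
Hypothesis pt_inj : injective pt.
Hypothesis ln_coset : forall e, ln e \in rcosets B G.
Hypothesis ln_onto : forall D, D \in rcosets B G -> exists e, ln e = D.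
Hypothesis incidence : forall x e, #|pt x :&: ln e| = (x \in sval e).

Lemma card_rcosets_pt : #|rcosets A G| = n.
Proof.
have -> : rcosets A G = [set pt x | x : 'I_n].
  apply/setP => C; apply/idP/imsetP => [/pt_onto[x <-] | [x _ ->]] //.
  by exists x.
by rewrite card_imset // card_ord.
Qed.

Lemma meets_pt_ln x e : (pt x :&: ln e != set0) = (x \in sval e).
Proof. by rewrite -card_gt0 incidence; case: (_ \in _). Qed.

Lemma meet_uniq C D a b : C \in rcosets A G -> D \in rcosets B G ->
  a \in C :&: D -> b \in C :&: D -> a = b.
Proof.
move=> /pt_onto[x <-] /ln_onto[e <-] aCD bCD.
have /card_le1_eqP CD_le1 : #|pt x :&: ln e| <= 1 by rewrite incidence leq_b1.
exact: CD_le1 _ _ bCD aCD.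
Qed.

Lemma line_through C1 C2 : C1 \in rcosets A G -> C2 \in rcosets A G -> C1 != C2 ->
  exists2 D, D \in rcosets B G & (C1 :&: D != set0) && (C2 :&: D != set0).
Proof.
move=> /pt_onto[x1 <-] /pt_onto[x2 <-] neC; have x12 : x1 != x2 by apply: contraNneq neC => ->.
have [e e12] := edge_of_pair x12; exists (ln e); first exact: ln_coset.
by rewrite !meets_pt_ln e12 !inE !eqxx orbT.
Qed.

Lemma line_unique C1 C2 D D' : C1 \in rcosets A G -> C2 \in rcosets A G -> C1 != C2 ->
    D \in rcosets B G -> (C1 :&: D != set0) && (C2 :&: D != set0) ->
    D' \in rcosets B G -> (C1 :&: D' != set0) && (C2 :&: D' != set0) ->
  D = D'.
Proof.
move=> /pt_onto[x1 <-] /pt_onto[x2 <-] neC; have x12 : x1 != x2 by apply: contraNneq neC => ->.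
move=> /ln_onto[e <-] /andP[]; rewrite !meets_pt_ln => x1e x2e.
move=> /ln_onto[e' <-] /andP[]; rewrite !meets_pt_ln => x1e' x2e'.
by congr ln; apply/val_inj; rewrite /= (edge_eq_pair x12 x1e x2e) (edge_eq_pair x12 x1e' x2e').
Qed.

Lemma line_sub_setU C1 C2 D : C1 \in rcosets A G -> C2 \in rcosets A G -> C1 != C2 ->
    D \in rcosets B G -> (C1 :&: D != set0) && (C2 :&: D != set0) ->
  D \subset C1 :|: C2.
Proof.
move=> /pt_onto[x1 <-] /pt_onto[x2 <-] neC; have x12 : x1 != x2 by apply: contraNneq neC => ->.
move=> /ln_onto[e <-] /andP[]; rewrite !meets_pt_ln => x1e x2e.
apply/subsetP => h hD; have Gh := subsetP (rcosets_sub sBG (ln_coset e)) h hD.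
have [x xh] : exists x, pt x = A :* h by apply/pt_onto/rcosetsP; exists h.
have : x \in sval e by rewrite -meets_pt_ln xh; apply/set0Pn; exists h; rewrite inE rcoset_refl.
by rewrite (edge_eq_pair x12) // !inE => /orP[] /eqP xi; rewrite -xi xh rcoset_refl ?orbT.
Qed.

Lemma card_afix_Rs_le1 g : g \in G -> g != 1 -> #|'Fix_(rcosets A G | 'Rs)[g]| <= 1.
Proof.
move=> Gg; rewrite leqNgt; apply: contra_neqN => /card_gt1P[C1 [C2 [+ + neC]]].
rewrite !mem_afix_Rs => /andP[AC1 /eqP C1g] /andP[AC2 /eqP C2g].
have [D BD meetsD] := line_through AC1 AC2 neC.
case/andP: (meetsD) => /set0Pn[d1 d1CD] /set0Pn[d2 d2CD].
have d1g : d1 * g \in C1 :&: D :* g by rewrite in_setI -C1g !mem_rcoset_mulg -in_setI.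
have d2g : d2 * g \in C2 :&: D :* g by rewrite in_setI -C2g !mem_rcoset_mulg -in_setI.
have Dg : D :* g = D.
  apply: line_unique AC1 AC2 neC (rcosets_mulg BD Gg) _ BD meetsD.
  by apply/andP; split; apply/set0Pn; [exists (d1 * g) | exists (d2 * g)].
rewrite Dg in d1g; apply: (mulgI d1); rewrite mulg1.
exact: meet_uniq AC1 BD d1g d1CD.
Qed.

Lemma rcosets_involution C1 C2 : C1 \in rcosets A G -> C2 \in rcosets A G -> C1 != C2 ->
  exists2 g, g \in G & #[g] = 2 /\ C1 :* g = C2.
Proof.
move=> AC1 AC2 neC; have [D BD meetsD] := line_through AC1 AC2 neC.
case/andP: (meetsD) => /set0Pn[d1 d1CD] /set0Pn[d2 d2CD].
have /setIP[d1C d1D] := d1CD; have /setIP[d2C d2D] := d2CD.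
have DG := rcosets_sub sBG BD.
have ne_d12 : d1 != d2.
  apply: contraNneq neC => d12.
  by rewrite (rcosets_rcoset AC1 d1C) (rcosets_rcoset AC2 d2C) d12.
(* D = [set d1; d2] contains d2 * d1^-1 * d2, which is not d2. *)
have d212 : d2 * d1^-1 * d2 = d1.
  have d212D : d2 * d1^-1 * d2 \in D.
    rewrite (rcosets_rcoset BD d2D) mem_rcoset_mulg -mem_rcoset.
    by rewrite -(rcosets_rcoset BD d1D).
  have /setUP[d212C1 | d212C2] := subsetP (line_sub_setU AC1 AC2 neC BD meetsD) _ d212D.
    by apply: meet_uniq AC1 BD _ d1CD; rewrite inE d212C1.
  have /(mulIg d2)/eqP : d2 * d1^-1 * d2 = 1 * d2.
    by rewrite mul1g; apply: meet_uniq AC2 BD _ d2CD; rewrite inE d212C2.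
  by rewrite -eq_mulgV1 eq_sym (negbTE ne_d12).
exists (d1^-1 * d2); first by rewrite groupM ?groupV ?(subsetP DG).
split; last by rewrite (rcosets_rcoset AC1 d1C) (rcosets_rcoset AC2 d2C) -rcosetM mulKVg.
apply: order_eq2; first by rewrite -eq_mulVg1.
by rewrite -mulgA (mulgA d2) d212 mulVg.
Qed.

Lemma incidence_not_dvd6 : ~~ (6 %| n).
Proof.
rewrite -card_rcosets_pt; apply: index_not_dvd6 sAG card_afix_Rs_le1 _ => C AC ntCA.
by apply: rcosets_involution (rcosets_refl A G) AC _; rewrite eq_sym.
Qed.

End CosetIncidence.

Lemma IK_mult_no_triangle n (u v w : IK_vert n) :
  0 < IK_mult u v -> 0 < IK_mult v w -> 0 < IK_mult u w -> False.
Proof. by case: u => ?; case: v => ?; case: w => ?. Qed.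

Lemma ord_le2_eq k (i j l : 'I_k) : k <= 2 -> i != j -> j != l -> i = l.
Proof.
move=> k_le2; rewrite -!(inj_eq (@ord_inj k)) => ij jl; apply: ord_inj.
move: (ltn_ord i) (ltn_ord j) (ltn_ord l) ij jl; lia.
Qed.

Section PhiGraph.

Variables (gT : finGroupType) (G : {group gT}) (S : seq gT).
Implicit Types u v : Phi_vert G S.

Lemma Phi_mult_gt0 u v : 0 < Phi_mult u v -> (sval u).1 != (sval v).1.
Proof. by rewrite /Phi_mult; case: ifP. Qed.

Lemma Phi_multE u v :
  (sval u).1 != (sval v).1 -> Phi_mult u v = #|(sval u).2 :&: (sval v).2|.
Proof. by rewrite /Phi_mult => ->. Qed.

Definition Phi_cycle (i : 'I_(size S)) : Phi_vert G S :=
  exist _ (i, <[nth 1 S i]> : {set gT}) (rcosets_refl _ G).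

Lemma Phi_mult_cycle i j : i != j -> 0 < Phi_mult (Phi_cycle i) (Phi_cycle j).
Proof. by move=> ij; rewrite Phi_multE //; apply/card_gt0P; exists 1; rewrite inE !group1. Qed.

Lemma cycle_nth_subG (i : 'I_(size S)) : {subset S <= G} -> <[nth 1 S i]> \subset G.
Proof. by move=> SG; rewrite cycle_subG; exact/SG/mem_nth. Qed.

End PhiGraph.

Section IncidenceGraphIso.

Variables (n : nat) (gT : finGroupType) (G : {group gT}) (S : seq gT).
Hypothesis SG : {subset S <= G}.
Variable f : IK_vert n -> Phi_vert G S.
Hypothesis f_bij : bijective f.
Hypothesis f_mult : forall u v, Phi_mult (f u) (f v) = IK_mult u v.

Implicit Types (x y : 'I_n) (e : K_edge n).
Local Notation idx u := (sval u).1.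

Definition iso_pt x := (sval (f (inl x))).2.
Definition iso_ln e := (sval (f (inr e))).2.

Lemma size_le2 : size S <= 2.
Proof.
case: f_bij => f' _ ff'; rewrite leqNgt; apply/negP => S_gt2.
have mult_f' a b : IK_mult (f' a) (f' b) = Phi_mult a b by rewrite -f_mult !ff'.
pose c k (lt_kS : k < size S) := f' (Phi_cycle G (Ordinal lt_kS)).
apply: (@IK_mult_no_triangle n (c 0 (ltnW (ltnW S_gt2))) (c 1%N (ltnW S_gt2)) (c 2 S_gt2));
  by rewrite mult_f' Phi_mult_cycle.
Qed.

Lemma idx_incident x e : x \in sval e -> idx (f (inl x)) != idx (f (inr e)).
Proof. by move=> xe; apply: Phi_mult_gt0; rewrite f_mult /= xe. Qed.

Lemma idx_pt_eq x y : idx (f (inl x)) = idx (f (inl y)).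
Proof.
have [-> // | xy] := eqVneq x y; have [e e_xy] := edge_of_pair xy.
have xe : x \in sval e by rewrite e_xy set21.
have ye : y \in sval e by rewrite e_xy set22.
by apply: (ord_le2_eq size_le2 (idx_incident xe)); rewrite eq_sym idx_incident.
Qed.

Lemma idx_pt_ln x e : idx (f (inl x)) != idx (f (inr e)).
Proof.
have /card_gt0P[y ye] : 0 < #|sval e| by rewrite (eqP (svalP e)).
by rewrite (idx_pt_eq x y) idx_incident.
Qed.

Lemma idx_ln_eq e e' : idx (f (inr e)) = idx (f (inr e')).
Proof.
have /card_gt0P[x _] : 0 < #|sval e| by rewrite (eqP (svalP e)).
apply: (ord_le2_eq size_le2 (_ : _ != idx (f (inl x)))) (idx_pt_ln x e').
by rewrite eq_sym idx_pt_ln.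
Qed.

Lemma iso_pt_coset x y : iso_pt x \in rcosets <[nth 1 S (idx (f (inl y)))]> G.
Proof. by rewrite -(idx_pt_eq x y); exact: svalP (f (inl x)). Qed.

Lemma iso_ln_coset e e' : iso_ln e \in rcosets <[nth 1 S (idx (f (inr e')))]> G.
Proof. by rewrite -(idx_ln_eq e e'); exact: svalP (f (inr e)). Qed.

Lemma iso_pt_onto y C :
  C \in rcosets <[nth 1 S (idx (f (inl y)))]> G -> exists x, iso_pt x = C.
Proof.
move=> yC; case: f_bij => f' _ ff'.
case Ex: (f' (exist _ (_, C) yC)) => [x | e]; first by exists x; rewrite /iso_pt -Ex ff'.
by have := idx_pt_ln y e; rewrite -Ex ff' eqxx.
Qed.

Lemma iso_ln_onto (e0 : K_edge n) D :
  D \in rcosets <[nth 1 S (idx (f (inr e0)))]> G -> exists e, iso_ln e = D.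
Proof.
move=> e0D; case: f_bij => f' _ ff'.
case Ee: (f' (exist _ (_, D) e0D)) => [x | e]; last by exists e; rewrite /iso_ln -Ee ff'.
by have := idx_pt_ln x e0; rewrite -Ee ff' eqxx.
Qed.

Lemma iso_pt_inj : injective iso_pt.
Proof.
move=> x y pt_xy; suff : inl x = inl y :> IK_vert n by case.
apply: (bij_inj f_bij); apply: val_inj => /=.
rewrite [sval (f (inl x))]surjective_pairing [sval (f (inl y))]surjective_pairing.
by rewrite (idx_pt_eq x y); congr pair.
Qed.

Lemma iso_incidence x e : #|iso_pt x :&: iso_ln e| = (x \in sval e).
Proof. by rewrite -Phi_multE ?idx_pt_ln // f_mult. Qed.

Lemma IK_Phi_iso_not_dvd6 (x0 : 'I_n) (e0 : K_edge n) : ~~ (6 %| n).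
Proof.
exact: (@incidence_not_dvd6 _ G <[nth 1%g S (idx (f (inl x0)))]>%G
  <[nth 1%g S (idx (f (inr e0)))]>%G n iso_pt iso_ln
  (cycle_nth_subG _ SG) (cycle_nth_subG _ SG) (iso_pt_coset^~ x0) (@iso_pt_onto x0)
  iso_pt_inj (iso_ln_coset^~ e0) (@iso_ln_onto e0) iso_incidence).
Qed.

End IncidenceGraphIso.

Theorem corollary4 (n : nat) (n_gt0 : 0 < n) (h6 : 6 %| n)
    (gT : finGroupType) (G : {group gT}) (S : seq gT) (SG : {subset S <= G}) :
  ~ mg_iso (@IK_mult n) (@Phi_mult gT G S).
Proof.
case=> f [f_bij f_mult].
have n_gt1 : 1 < n by apply: leq_trans (dvdn_leq n_gt0 h6).
have [e0 _] := @edge_of_pair n (Ordinal n_gt0) (Ordinal n_gt1) isT.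
by move/negP: (IK_Phi_iso_not_dvd6 SG f_bij f_mult (Ordinal n_gt0) e0).
Qed.
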